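(* Let $R$ be a ring, $\mathcal{X}$ a class of left $R$-modules and $\mathcal{Y}$ a class of right $R$-modules. Suppose $\mathcal{GF}_{(\mathcal{X},\mathcal{Y})}(R)$ is closed under extensions. Then $\mathcal{GF}_{(\mathcal{X},\mathcal{Y})}(R)=\mathcal{GF}^{2}_{(\mathcal{X},\mathcal{Y})}(R)$.
   Context: An exact sequence $\mathbb{E}$ of left $R$-modules is $\mathcal{Y}\otimes_R-$ exact if $Y\otimes_R\mathbb{E}$ is exact for all $Y\in\mathcal{Y}$. A left $R$-module $M$ is Gorenstein $(\mathcal{X},\mathcal{Y})$-flat if there is a $\mathcal{Y}\otimes_R-$ exact exact sequence $\cdots\to X_1\to X_0\to X^0\to X^1\to\cdots$ of modules in $\mathcal{X}$ with $M\cong\ker(X^0\to X^1)$; $\mathcal{GF}_{(\mathcal{X},\mathcal{Y})}(R)$ is the class of these modules. $\mathcal{GF}^{2}_{(\mathcal{X},\mathcal{Y})}(R)$ is the class of left $R$-modules $M$ for which there is a $\mathcal{Y}\otimes_R-$ exact exact sequence $\cdots\to G_1\to G_0\to G^0\to G^1\to\cdots$ of modules in $\mathcal{GF}_{(\mathcal{X},\mathcal{Y})}(R)$ with $M\cong\ker(G^0\to G^1)$. *)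

From mathcomp Require Import all_boot all_order all_algebra.
Set Implicit Arguments. Unset Strict Implicit. Unset Printing Implicit Defensive.
Import GRing.Theory.
Local Open Scope ring_scope.

(* Left R-modules: lmodType R.  Right R-modules: lmodType R^c (left modules
   over the converse ring), where (r : R^c) *: y denotes y.r. *)

Section GFlat.
Variable R : pzRingType.

Definition balanced (Y : lmodType R^c) (M : lmodType R) (A : zmodType)
    (f : Y -> M -> A) : Prop :=
  [/\ forall y1 y2 m, f (y1 + y2) m = f y1 m + f y2 m,
      forall y m1 m2, f y (m1 + m2) = f y m1 + f y m2 &
      forall (r : R) y m, f ((r : R^c) *: y) m = f y (r *: m)].

(* Elements of Y (x)_R M are represented by formal sums sum_i y_i (x) m_i,
   i.e. sequences of pairs; two formal sums are equal in Y (x)_R M iff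
   every balanced map into every abelian group takes the same value on them
   (universal property of the tensor product). *)
Definition tens_eq (Y : lmodType R^c) (M : lmodType R)
    (s t : seq (Y * M)) : Prop :=
  forall (A : zmodType) (f : Y -> M -> A), balanced f ->
    \sum_(p <- s) f p.1 p.2 = \sum_(p <- t) f p.1 p.2.

Definition tens_map (Y : lmodType R^c) (M N : lmodType R) (d : M -> N)
    (s : seq (Y * M)) : seq (Y * N) := [seq (p.1, d p.2) | p <- s].

Definition complex_exact (C : int -> lmodType R)
    (d : forall n : int, {linear C n -> C (n + 1)}) : Prop :=
  forall (n : int) (x : C (n + 1)),
    d (n + 1) x = 0 <-> exists y : C n, d n y = x.

Definition tensor_exact (Y : lmodType R^c) (C : int -> lmodType R)
    (d : forall n : int, {linear C n -> C (n + 1)}) : Prop :=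
  forall (n : int) (t : seq (Y * C (n + 1))),
    tens_eq (tens_map (d (n + 1)) t) [::] <->
    exists s : seq (Y * C n), tens_eq (tens_map (d n) s) t.

Definition Ytensor_exact (Yc : lmodType R^c -> Prop) (C : int -> lmodType R)
    (d : forall n : int, {linear C n -> C (n + 1)}) : Prop :=
  forall Y, Yc Y -> tensor_exact Y d.

Definition GF_of (P : lmodType R -> Prop) (Yc : lmodType R^c -> Prop)
    (M : lmodType R) : Prop :=
  exists (C : int -> lmodType R) (d : forall n : int, {linear C n -> C (n + 1)}),
    [/\ forall n, P (C n), complex_exact d, Ytensor_exact Yc d &
        exists f : {linear M -> C 0}, injective f /\
          (forall x : C 0, d 0 x = 0 <-> exists m, f m = x)].

Definition GF (Xc : lmodType R -> Prop) (Yc : lmodType R^c -> Prop) :=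
  GF_of Xc Yc.
Definition GF2 (Xc : lmodType R -> Prop) (Yc : lmodType R^c -> Prop) :=
  GF_of (GF Xc Yc) Yc.

Definition closed_under_extensions (P : lmodType R -> Prop) : Prop :=
  forall (A B C : lmodType R) (f : {linear A -> B}) (g : {linear B -> C}),
    injective f -> (forall c, exists b, g b = c) ->
    (forall b, g b = 0 <-> exists a, f a = b) ->
    P A -> P C -> P B.
End GFlat.

From HB Require Import structures.
From mathcomp Require Import all_boot all_order all_algebra.
From mathcomp Require Import boolp.
Set Implicit Arguments. Unset Strict Implicit. Unset Printing Implicit Defensive.
Import GRing.Theory.
Local Open Scope ring_scope.
Local Open Scope quotient_scope.

(* A module M lies in GF_of P exactly when it has a right step M -> G -> N and a
   left step K -> G -> M, both short exact and Y(x)-exact, with G in P and N, K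
   again in GF_of P: kernels of a complete resolution give the steps, and steps
   chosen by dependent choice splice back into a complete resolution.  For M in
   GF^2, push a right step M -> G -> N out along a right step G -> X -> L of G:
   this gives M -> X -> X +_G N, and the cokernel X +_G N is again in GF^2
   because pushing N -> G' -> N' out along N -> X +_G N produces a module in GF
   (it is an extension of L by G', and GF is closed under extensions).  Left
   steps are improved dually with pullbacks.  All the Y(x)-exactness bookkeeping
   reduces to right exactness of Y (x) -, proved from the universal property of
   balanced maps. *)

Section Exactness.
Variable R : pzRingType.
Implicit Types (A B C : lmodType R).

Definition exact_at A B C (f : A -> B) (g : B -> C) : Prop :=
  forall b, g b = 0 <-> exists a, f a = b.

Definition short_exact A B C (f : A -> B) (g : B -> C) : Prop :=
  [/\ injective f, forall c, exists b, g b = c & exact_at f g].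

Definition tensor_exact_at (Y : lmodType R^c) A B C (f : A -> B) (g : B -> C) :=
  forall t : seq (Y * B),
    tens_eq (tens_map g t) [::] <-> exists s, tens_eq (tens_map f s) t.

Definition tensor_mono (Yc : lmodType R^c -> Prop) A B (f : A -> B) : Prop :=
  forall Y, Yc Y -> forall s : seq (Y * A), tens_eq (tens_map f s) [::] -> tens_eq s [::].

Lemma exact_at_comp0 A B C (f : A -> B) (g : B -> C) :
  exact_at f g -> forall a, g (f a) = 0.
Proof. by move=> fg a; apply/fg; exists a. Qed.

Lemma exact_at_inj_comp A B C (D : lmodType R) (f : A -> B) (g : B -> C)
    (h : {linear C -> D}) :
  injective h -> exact_at f g -> exact_at f (h \o g).
Proof. by move=> h_inj fg b; rewrite -fg /= -(linear0 h); split=> [/h_inj|->]. Qed.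

End Exactness.

Section FormalTensors.
Variables (R : pzRingType) (Y : lmodType R^c).
Implicit Types (M N : lmodType R) (A : zmodType).

Lemma balanced0r M A (F : Y -> M -> A) : balanced F -> forall y, F y 0 = 0.
Proof. by case=> _ FD _ y; apply/(@addrI _ (F y 0)); rewrite -FD !addr0. Qed.

Lemma balancedNl M A (F : Y -> M -> A) : balanced F -> forall y m, F (- y) m = - F y m.
Proof.
case=> FD _ _ y m; apply/(@addrI _ (F y m)); rewrite -FD !subrr.
by apply/(@addrI _ (F 0 m)); rewrite -FD !addr0.
Qed.

Lemma tens_eq_sym M (s t : seq (Y * M)) : tens_eq s t -> tens_eq t s.
Proof. by move=> st A F FB; rewrite st. Qed.

Lemma tens_eq_trans M (s t u : seq (Y * M)) :
  tens_eq s t -> tens_eq t u -> tens_eq s u.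
Proof. by move=> st tu A F FB; rewrite st ?tu. Qed.

Lemma tens_eq_catC M (s t : seq (Y * M)) : tens_eq (s ++ t) (t ++ s).
Proof. by move=> A F FB; rewrite !big_cat /= addrC. Qed.

Definition tens_opp M (s : seq (Y * M)) := [seq (- p.1, p.2) | p <- s].

Lemma tens_sum_opp M A (F : Y -> M -> A) (s : seq (Y * M)) : balanced F ->
  \sum_(p <- tens_opp s) F p.1 p.2 = - \sum_(p <- s) F p.1 p.2.
Proof. by move=> FB; rewrite big_map -sumrN; apply: eq_bigr => p _; apply: balancedNl. Qed.

Lemma tens_eq_cat_opp M (s : seq (Y * M)) : tens_eq (tens_opp s ++ s) [::].
Proof. by move=> A F FB; rewrite big_cat /= tens_sum_opp // big_nil addNr. Qed.

Lemma tens_map_comp M N (P : lmodType R) (g : N -> P) (h : M -> N) (s : seq (Y * M)) :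
  tens_map g (tens_map h s) = tens_map (g \o h) s.
Proof. by rewrite /tens_map -map_comp. Qed.

Lemma tens_map_id M (s : seq (Y * M)) : tens_map id s = s.
Proof. by rewrite /tens_map -[RHS]map_id; apply: eq_map => -[]. Qed.

Lemma eq_tens_map M N (g h : M -> N) : g =1 h -> tens_map (Y:=Y) g =1 tens_map h.
Proof. by move=> gh s; apply: eq_map => p; rewrite gh. Qed.

Lemma tens_map_cat M N (h : M -> N) (s t : seq (Y * M)) :
  tens_map h (s ++ t) = tens_map h s ++ tens_map h t.
Proof. exact: map_cat. Qed.

Lemma tens_map_opp M N (h : M -> N) (s : seq (Y * M)) :
  tens_map h (tens_opp s) = tens_opp (tens_map h s).
Proof. by rewrite /tens_map /tens_opp -!map_comp. Qed.

Lemma tens_eq_map M N (h : {linear M -> N}) (s t : seq (Y * M)) :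
  tens_eq s t -> tens_eq (tens_map h s) (tens_map h t).
Proof.
move=> st A F [FDl FDr FZ]; rewrite !big_map; apply: (st A (fun y m => F y (h m))).
by split=> *; rewrite ?FDl ?linearD ?FDr ?FZ ?linearZ.
Qed.

Lemma tens_map0 M N (h : M -> N) (s : seq (Y * M)) :
  (forall m, h m = 0) -> tens_eq (tens_map h s) [::].
Proof.
move=> h0 A F FB; rewrite big_nil big_map big1 // => p _.
by rewrite /= h0 balanced0r.
Qed.

End FormalTensors.

Section TensorRightExact.
Variables (R : pzRingType) (Y : lmodType R^c) (A B C : lmodType R).
Variables (f : {linear A -> B}) (g : {linear B -> C}).

Lemma tens_map_surj : (forall c, exists b, g b = c) ->
  forall u : seq (Y * C), exists t, tens_map g t = u.
Proof.
move=> g_surj; elim=> [|[y c] u [t <-]]; first by exists [::].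
by have [b <-] := g_surj c; exists ((y, b) :: t).
Qed.

(* Formal sums modulo the balanced relations and the image of Y (x) f: the
   quotient tens_coker is the cokernel of Y (x) f. *)
Definition tens_cong (s t : seq (Y * B)) : bool :=
  `[< exists u, tens_eq s (t ++ tens_map f u) >].

Lemma tens_congP s t :
  reflect (exists u, tens_eq s (t ++ tens_map f u)) (tens_cong s t).
Proof. exact: asboolP. Qed.

Lemma tens_cong_equiv : equiv_class_of tens_cong.
Proof.
split=> [s|s t|t s u]; first by apply/tens_congP; exists [::]; rewrite cats0.
  apply/tens_congP/tens_congP => -[u st]; exists (tens_opp u) => G F FB;
  by rewrite big_cat /= tens_map_opp tens_sum_opp // (st G F FB) big_cat /= addrK.
move=> /tens_congP[v st] /tens_congP[w tu]; apply/tens_congP; exists (w ++ v).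
by move=> G F FB; rewrite (st G F FB) big_cat /= (tu G F FB) tens_map_cat !big_cat /= addrA.
Qed.

Lemma tens_cong_cat s s' t t' :
  tens_cong s s' -> tens_cong t t' -> tens_cong (s ++ t) (s' ++ t').
Proof.
move=> /tens_congP[u ss'] /tens_congP[v tt']; apply/tens_congP; exists (u ++ v).
move=> G F FB; rewrite !big_cat /= (ss' G F FB) (tt' G F FB) tens_map_cat !big_cat /=.
by rewrite addrACA.
Qed.

Lemma tens_cong_opp s t : tens_cong s t -> tens_cong (tens_opp s) (tens_opp t).
Proof.
move=> /tens_congP[u st]; apply/tens_congP; exists (tens_opp u) => G F FB.
by rewrite big_cat /= tens_map_opp !tens_sum_opp // (st G F FB) big_cat opprD.
Qed.

Canonical tens_cong_equiv_rel := EquivRelPack tens_cong_equiv.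
Canonical tens_cong_encModRel := defaultEncModRel tens_cong.

Definition tens_coker := {eq_quot tens_cong}.
HB.instance Definition _ : EqQuotient _ tens_cong tens_coker := EqQuotient.on tens_coker.
HB.instance Definition _ := Choice.on tens_coker.

Lemma tens_coker_eq s t : tens_eq s t -> s = t %[mod tens_coker].
Proof. by move=> st; apply/eqmodP/tens_congP; exists [::]; rewrite cats0. Qed.

Lemma tens_cong_repr s : tens_cong (repr (\pi_tens_coker s)) s.
Proof. by apply/eqmodP; rewrite reprK. Qed.

Definition tc_zero : tens_coker := lift_cst tens_coker [::].
Definition tc_add := lift_op2 tens_coker cat.
Definition tc_opp := lift_op1 tens_coker (@tens_opp R Y B).

Canonical pi_tc_zero := PiConst tc_zero.

Lemma pi_tc_add : {morph \pi : s t / s ++ t >-> tc_add s t}.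
Proof.
move=> s t; unlock tc_add; apply/eqmodP.
by rewrite equiv_sym /= tens_cong_cat ?tens_cong_repr.
Qed.
Canonical pi_tc_add_morph := PiMorph2 pi_tc_add.

Lemma pi_tc_opp : {morph \pi : s / tens_opp s >-> tc_opp s}.
Proof.
move=> s; unlock tc_opp; apply/eqmodP.
by rewrite equiv_sym /= tens_cong_opp ?tens_cong_repr.
Qed.
Canonical pi_tc_opp_morph := PiMorph1 pi_tc_opp.

Lemma tc_addA : associative tc_add.
Proof. by move=> x y z; rewrite -[x]reprK -[y]reprK -[z]reprK !piE catA. Qed.

Lemma tc_addC : commutative tc_add.
Proof.
by move=> x y; rewrite -[x]reprK -[y]reprK !piE; apply/tens_coker_eq/tens_eq_catC.
Qed.

Lemma tc_add0 : left_id tc_zero tc_add.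
Proof. by move=> x; rewrite -[x]reprK !piE. Qed.

Lemma tc_addN : left_inverse tc_zero tc_opp tc_add.
Proof. by move=> x; rewrite -[x]reprK !piE; apply/tens_coker_eq/tens_eq_cat_opp. Qed.

HB.instance Definition _ :=
  GRing.isZmodule.Build tens_coker tc_addA tc_addC tc_add0 tc_addN.

Lemma tens_coker_cat s t :
  \pi_tens_coker (s ++ t) = \pi_tens_coker s + \pi_tens_coker t.
Proof. by rewrite piE. Qed.

Definition tc_tens (y : Y) (b : B) := \pi_tens_coker [:: (y, b)].

Lemma tc_tens_balanced : balanced tc_tens.
Proof.
split=> *; rewrite /tc_tens -?tens_coker_cat; apply/tens_coker_eq => G F [FDl FDr FZ];
by rewrite !big_cons !big_nil /= ?FDl ?FDr ?FZ ?addr0.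
Qed.

Lemma sum_tc_tens t : \sum_(p <- t) tc_tens p.1 p.2 = \pi t.
Proof.
elim: t => [|[y b] t IHt]; first by rewrite big_nil piE.
by rewrite big_cons IHt /tc_tens -tens_coker_cat.
Qed.

Hypotheses (g_surj : forall c, exists b, g b = c) (fg_exact : exact_at f g).

Definition tc_lift (y : Y) (c : C) := tc_tens y (sval (cid (g_surj c))).

(* Two lifts of [g b] differ by an element of the image of [f]. *)
Lemma tc_lift_g y b : tc_lift y (g b) = tc_tens y b.
Proof.
rewrite /tc_lift; case: cid => b' /= gb'.
have [a fa] : exists a, f a = b' - b by apply/fg_exact; rewrite linearB gb' subrr.
apply/eqmodP/tens_congP; exists [:: (y, a)] => G F [_ FDr _].
by rewrite !big_cons !big_nil /= !addr0 -FDr fa addrC subrK.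
Qed.

Lemma tc_lift_balanced : balanced tc_lift.
Proof.
have [FDl FDr FZ] := tc_tens_balanced.
split=> [y1 y2 c|y c1 c2|r y c].
- by have [b <-] := g_surj c; rewrite !tc_lift_g FDl.
- by have [b1 <-] := g_surj c1; have [b2 <-] := g_surj c2; rewrite -linearD !tc_lift_g FDr.
- by have [b <-] := g_surj c; rewrite -linearZ !tc_lift_g FZ.
Qed.

Lemma tensor_right_exact : tensor_exact_at Y f g.
Proof.
move=> t; split=> [/(_ _ _ tc_lift_balanced)|[s st]].
  rewrite big_nil big_map; under eq_bigr do rewrite tc_lift_g.
  rewrite sum_tc_tens -[0]/tc_zero piE => /eqquotP/tens_congP[u tu].
  by exists u; apply: tens_eq_sym.
apply: tens_eq_trans (tens_eq_map g (tens_eq_sym st)) _.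
by rewrite tens_map_comp; apply: tens_map0 => a; apply: exact_at_comp0 fg_exact a.
Qed.

End TensorRightExact.

Section Kernel.
Variables (R : pzRingType) (U V : lmodType R) (h : {linear U -> V}).

Definition in_ker : {pred U} := fun x => h x == 0.

Lemma in_ker_submod_closed : submod_closed in_ker.
Proof.
split=> [|a x y]; rewrite !unfold_in /= ?linear0 //.
by rewrite linearP => /eqP-> /eqP->; rewrite scaler0 addr0.
Qed.

HB.instance Definition _ :=
  GRing.isSubmodClosed.Build R U in_ker (GRing.submod_closed_semi in_ker_submod_closed).

Definition kerm := {x : U | in_ker x}.
HB.instance Definition _ := [isSub for (@sval _ in_ker : kerm -> U)].
HB.instance Definition _ := [Choice of kerm by <:].
HB.instance Definition _ := [SubChoice_isSubLmodule of kerm by <:].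

Lemma kermP (k : kerm) : h (val k) = 0.
Proof. exact/eqP/(valP k). Qed.

Lemma kerm_exact : exact_at (val : kerm -> U) h.
Proof.
move=> x; split=> [/eqP hx|[k <-]]; last exact: kermP.
by exists (Sub x (hx : in_ker x)); rewrite SubK.
Qed.

End Kernel.

Section Cokernel.
Variables (R : pzRingType) (U V : lmodType R) (f : {linear U -> V}).

Definition in_im : {pred V} := fun v => `[< exists u, f u = v >].

Lemma in_im_submod_closed : submod_closed in_im.
Proof.
split=> [|a _ _ /asboolP[u <-] /asboolP[w <-]]; apply/asboolP.
  by exists 0; rewrite linear0.
by exists (a *: u + w); rewrite linearP.
Qed.

HB.instance Definition _ :=
  GRing.isSubmodClosed.Build R V in_im (GRing.submod_closed_semi in_im_submod_closed).

Definition coker := Quotient.quot in_im.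
HB.instance Definition _ := GRing.Zmodule.on coker.

Definition coker_scale (a : R) (q : coker) : coker := \pi_coker (a *: repr q).

Lemma pi_coker_scale a : {morph \pi_coker : x / a *: x >-> coker_scale a x}.
Proof.
move=> x; rewrite /coker_scale; apply/eqP; rewrite -Quotient.idealrBE -scalerBr.
by rewrite rpredZ // Quotient.idealrBE reprK.
Qed.
Canonical pi_coker_scale_morph a := PiMorph1 (pi_coker_scale a).

Lemma coker_scaleA a b q : coker_scale a (coker_scale b q) = coker_scale (a * b) q.
Proof. by rewrite -[q]reprK !piE scalerA. Qed.

Lemma coker_scale1 : left_id 1 coker_scale.
Proof. by move=> q; rewrite -[q]reprK !piE scale1r. Qed.

Lemma coker_scaleDr : right_distributive coker_scale +%R.
Proof. by move=> a p q; rewrite -[p]reprK -[q]reprK !piE scalerDr. Qed.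

Lemma coker_scaleDl q : {morph coker_scale^~ q : a b / a + b}.
Proof. by move=> a b; rewrite -[q]reprK !piE scalerDl. Qed.

HB.instance Definition _ := GRing.Zmodule_isLmodule.Build R coker
  coker_scaleA coker_scale1 coker_scaleDr coker_scaleDl.

Definition coker_pi (v : V) : coker := \pi_coker v.

Lemma coker_pi_linear : linear coker_pi.
Proof. by move=> a x y; rewrite /coker_pi !piE. Qed.

HB.instance Definition _ := GRing.isLinear.Build R V coker _ coker_pi coker_pi_linear.

Lemma coker_reprK : cancel repr coker_pi.
Proof. exact: reprK. Qed.

Lemma coker_pi_surj q : exists v, coker_pi v = q.
Proof. by exists (repr q); rewrite coker_reprK. Qed.

Lemma coker_pi_exact : exact_at f coker_pi.
Proof.
move=> v; rewrite -(linear0 coker_pi); apply: (iff_trans (rwP eqP)).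
by rewrite -Quotient.idealrBE subr0; split=> /asboolP.
Qed.

Section Lift.
Variables (W : lmodType R) (phi : {linear V -> W}) (phi_f : forall u, phi (f u) = 0).

Definition coker_lift of (forall u, phi (f u) = 0) := fun q : coker => phi (repr q).

Lemma coker_liftE v : coker_lift phi_f (coker_pi v) = phi v.
Proof.
rewrite /coker_lift; apply/eqP; rewrite -subr_eq0 -linearB; apply/eqP.
have /coker_pi_exact[u <-] : coker_pi (repr (coker_pi v) - v) = 0.
  by rewrite linearB /= coker_reprK subrr.
exact: phi_f.
Qed.

Lemma coker_lift_linear : linear (coker_lift phi_f).
Proof.
move=> a p q; have [x <-] := coker_pi_surj p; have [y <-] := coker_pi_surj q.
by rewrite -linearP !coker_liftE linearP.
Qed.

HB.instance Definition _ :=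
  GRing.isLinear.Build R coker W _ (coker_lift phi_f) coker_lift_linear.

End Lift.
End Cokernel.

Section FactorMono.
Variables (R : pzRingType) (A B W : lmodType R).
Variables (f : {linear A -> B}) (g : {linear W -> B}).
Hypotheses (g_im : forall w, exists a, f a = g w) (f_inj : injective f).

Definition factor_mono of injective f := fun w => sval (cid (g_im w)).

Lemma factor_monoK w : f (factor_mono f_inj w) = g w.
Proof. exact: svalP (cid (g_im w)). Qed.

Lemma factor_mono_linear : linear (factor_mono f_inj).
Proof. by move=> r u v; apply: f_inj; rewrite linearP !factor_monoK linearP. Qed.

HB.instance Definition _ :=
  GRing.isLinear.Build R W A _ (factor_mono f_inj) factor_mono_linear.

End FactorMono.

Section PairInjections.
Variables (R : pzRingType) (U V : lmodType R).

Definition inlm (u : U) : U * V := (u, 0).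
Definition inrm (v : V) : U * V := (0, v).

Lemma inlm_linear : linear inlm.
Proof. by move=> r x y; congr (_, _); rewrite /= scaler0 addr0. Qed.

Lemma inrm_linear : linear inrm.
Proof. by move=> r x y; congr (_, _); rewrite /= scaler0 addr0. Qed.

HB.instance Definition _ := GRing.isLinear.Build R U (U * V)%type _ inlm inlm_linear.
HB.instance Definition _ := GRing.isLinear.Build R V (U * V)%type _ inrm inrm_linear.

Lemma inlm_inrm u v : inlm u + inrm v = (u, v).
Proof. by congr (_, _); rewrite /= ?addr0 ?add0r. Qed.

End PairInjections.

Section Pushout.
Variables (R : pzRingType) (A B C : lmodType R).
Variables (a : {linear A -> B}) (h : {linear A -> C}).

Definition po_rel (x : A) : B * C := (a x, - h x).

Lemma po_rel_linear : linear po_rel.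
Proof. by move=> r x y; congr (_, _); rewrite /= linearP // opprD scalerN. Qed.

HB.instance Definition _ := GRing.isLinear.Build R A (B * C)%type _ po_rel po_rel_linear.

Definition pushout := coker po_rel.
Definition po_inl (b : B) : pushout := coker_pi po_rel (inlm C b).
Definition po_inr (c : C) : pushout := coker_pi po_rel (inrm B c).

Lemma po_inl_linear : linear po_inl.
Proof. by move=> r x y; rewrite /po_inl !linearP. Qed.

Lemma po_inr_linear : linear po_inr.
Proof. by move=> r x y; rewrite /po_inr !linearP. Qed.

HB.instance Definition _ := GRing.isLinear.Build R B pushout _ po_inl po_inl_linear.
HB.instance Definition _ := GRing.isLinear.Build R C pushout _ po_inr po_inr_linear.

Lemma po_pair b c : coker_pi po_rel (b, c) = po_inl b + po_inr c.
Proof. by rewrite /po_inl /po_inr -linearD /= inlm_inrm. Qed.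

Lemma po_eq0 b c : coker_pi po_rel (b, c) = 0 <-> exists x, b = a x /\ c = - h x.
Proof. by rewrite coker_pi_exact; split=> -[x] => [[<- <-]|[-> ->]]; exists x. Qed.

Lemma po_inlr x : po_inl (a x) = po_inr (h x).
Proof. by apply/eqP; rewrite -subr_eq0 -linearN /= -po_pair; apply/eqP/po_eq0; exists x. Qed.

Lemma po_inl_eq0 b : po_inl b = 0 <-> exists x, b = a x /\ h x = 0.
Proof.
rewrite po_eq0; split=> -[x [-> hx]]; exists x; split=> //.
  by apply: oppr_inj; rewrite -hx oppr0.
by rewrite hx oppr0.
Qed.

Lemma po_inl_ses_of_surj (K : lmodType R) (k : {linear K -> A}) :
  injective a -> short_exact k h -> short_exact (a \o k) po_inl.
Proof.
move=> a_inj [k_inj h_surj kh]; split.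
- by move=> u v /a_inj/k_inj.
- move=> q; have [[b c] <-] := coker_pi_surj q; have [x <-] := h_surj c.
  by exists (b + a x); rewrite linearD /= po_inlr po_pair.
- move=> b; rewrite po_inl_eq0; split=> [[x [-> /kh[u <-]]]|[u <-]]; first by exists u.
  by exists (k u); split=> //; apply: exact_at_comp0 kh u.
Qed.

Section InlCokernel.
Variables (D : lmodType R) (k : {linear C -> D}) (hk : short_exact h k).

Lemma po_rel_snd x : (k \o snd) (po_rel x) = 0.
Proof. by have [_ _ hk0] := hk; rewrite /= linearN (exact_at_comp0 hk0) oppr0. Qed.

Definition po_inl_coker := coker_lift po_rel_snd.

Lemma po_inl_cokerE b c : po_inl_coker (coker_pi po_rel (b, c)) = k c.
Proof. exact: coker_liftE. Qed.

Lemma po_inl_ses : short_exact po_inl po_inl_coker.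
Proof.
have [h_inj k_surj hk0] := hk; split.
- move=> b b' /eqP; rewrite -subr_eq0 -linearB => /eqP/po_inl_eq0[x [bb' hx]].
  by apply/eqP; rewrite -subr_eq0 bb' (h_inj x 0) ?linear0.
- by move=> d; have [c <-] := k_surj d; exists (coker_pi po_rel (0, c)); rewrite po_inl_cokerE.
- move=> q; have [[b c] <-] := coker_pi_surj q; rewrite po_inl_cokerE.
  split=> [/hk0[x <-]|[b' bc]]; first by exists (b + a x); rewrite linearD /= po_inlr po_pair.
  by rewrite -(po_inl_cokerE b) -bc po_inl_cokerE linear0.
Qed.

End InlCokernel.

Section InrCokernel.
Variables (D : lmodType R) (l : {linear B -> D}) (al : short_exact a l).

Lemma po_rel_fst x : (l \o fst) (po_rel x) = 0.
Proof. by have [_ _ al0] := al; apply: exact_at_comp0 al0 x. Qed.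

Definition po_inr_coker := coker_lift po_rel_fst.

Lemma po_inr_cokerE b c : po_inr_coker (coker_pi po_rel (b, c)) = l b.
Proof. exact: coker_liftE. Qed.

Lemma po_inr_ses : short_exact po_inr po_inr_coker.
Proof.
have [a_inj l_surj al0] := al; split.
- move=> c c' /eqP; rewrite -subr_eq0 -linearB => /eqP /po_eq0[x [ax cc']].
  by apply/eqP; rewrite -subr_eq0 cc' oppr_eq0 (a_inj x 0) ?linear0.
- by move=> d; have [b <-] := l_surj d; exists (coker_pi po_rel (b, 0)); rewrite po_inr_cokerE.
- move=> q; have [[b c] <-] := coker_pi_surj q; rewrite po_inr_cokerE.
  split=> [/al0[x <-]|[c' bc]]; first by exists (h x + c); rewrite linearD /= -po_inlr po_pair.
  by rewrite -(po_inr_cokerE _ c) -bc po_inr_cokerE linear0.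
Qed.

End InrCokernel.

Lemma po_inl_tensor_mono (Yc : lmodType R^c -> Prop) :
  tensor_mono Yc h -> tensor_mono Yc po_inl.
Proof.
move=> h_mono Y Yc_Y t; rewrite -(eq_tens_map (g := coker_pi po_rel \o inlm C)) //.
rewrite -tens_map_comp.
case/(tensor_right_exact (@coker_pi_surj _ _ _ po_rel) (coker_pi_exact po_rel)) => s st.
have st1 := tens_eq_map fst st; have st2 := tens_eq_map snd st.
rewrite !tens_map_comp in st1 st2.
have hs : tens_eq (tens_map h s) [::].
  have /(tens_eq_map -%R) : tens_eq (tens_map (-%R \o h) s) [::].
    by apply: tens_eq_trans st2 _; apply: tens_map0.
  by rewrite tens_map_comp (eq_tens_map (h := h)) // => x /=; rewrite opprK.
rewrite (eq_tens_map (h := a)) // (eq_tens_map (h := id)) // tens_map_id in st1.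
exact: tens_eq_trans (tens_eq_sym st1) (tens_eq_map a (h_mono Y Yc_Y s hs)).
Qed.

End Pushout.

Section Pullback.
Variables (R : pzRingType) (X K G : lmodType R).
Variables (dl : {linear X -> G}) (al : {linear K -> G}).

Definition pb_rel : {linear (X * K)%type -> G} := (dl \o fst) \- (al \o snd).
Definition pullback := kerm pb_rel.
Definition pb_fst : {linear pullback -> X} := fst \o val.
Definition pb_snd : {linear pullback -> K} := snd \o val.

Lemma pb_comm z : dl (pb_fst z) = al (pb_snd z).
Proof. by apply/eqP; rewrite -subr_eq0; apply/eqP/(kermP z). Qed.

Lemma pb_mem x k : dl x = al k -> exists z : pullback, val z = (x, k).
Proof. by move=> xk; apply/kerm_exact; rewrite /= xk subrr. Qed.

Lemma pb_ext z z' : pb_fst z = pb_fst z' -> pb_snd z = pb_snd z' -> z = z'.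
Proof. by move=> e1 e2; apply: val_inj; apply: injective_projections. Qed.

Lemma pb_fst_inj : injective al -> injective pb_fst.
Proof.
by move=> al_inj z z' zz'; apply: pb_ext => //; apply: al_inj; rewrite -!pb_comm zz'.
Qed.

Section SndKernel.
Variables (L : lmodType R) (g : {linear L -> X}) (g_dl : short_exact g dl).

Lemma pb_inl_mem l : exists z : pullback, val z = (inlm K \o g) l.
Proof. by apply: pb_mem; have [_ _ gdl] := g_dl; rewrite linear0 exact_at_comp0. Qed.

Definition pb_inl := factor_mono pb_inl_mem val_inj.

Lemma pb_inlE l : val (pb_inl l) = (g l, 0).
Proof. exact: factor_monoK. Qed.

Lemma pb_snd_ses : short_exact pb_inl pb_snd.
Proof.
have [g_inj dl_surj gdl] := g_dl; split.
- by move=> l l' /(congr1 val); rewrite !pb_inlE => -[/g_inj].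
- move=> k; have [x xk] := dl_surj (al k); have [z zxk] := pb_mem xk.
  by exists z; rewrite /= zxk.
- move=> z; split=> [zk|[l <-]]; last by rewrite /= pb_inlE.
  have /gdl[l gl] : dl (pb_fst z) = 0 by rewrite pb_comm zk linear0.
  by exists l; apply: pb_ext; rewrite /= pb_inlE.
Qed.

End SndKernel.

Section FstKernel.
Variables (N : lmodType R) (nu : {linear N -> K}) (nu_al : short_exact nu al).

Lemma pb_inr_mem n : exists z : pullback, val z = (@inrm _ X K \o nu) n.
Proof. by apply: pb_mem; have [_ _ nual] := nu_al; rewrite linear0 exact_at_comp0. Qed.

Definition pb_inr := factor_mono pb_inr_mem val_inj.

Lemma pb_inrE n : val (pb_inr n) = (0, nu n).
Proof. exact: factor_monoK. Qed.

Lemma pb_fst_ses : short_exact pb_inr pb_fst.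
Proof.
have [nu_inj al_surj nual] := nu_al; split.
- by move=> n n' /(congr1 val); rewrite !pb_inrE => -[/nu_inj].
- move=> x; have [k kx] := al_surj (dl x); have [z zxk] := pb_mem (esym kx).
  by exists z; rewrite /= zxk.
- move=> z; split=> [zx|[n <-]]; last by rewrite /= pb_inrE.
  have /nual[n nk] : al (pb_snd z) = 0 by rewrite -pb_comm zx linear0.
  by exists n; apply: pb_ext; rewrite /= pb_inrE.
Qed.

End FstKernel.

Lemma pb_fst_ses_comp (M : lmodType R) (be : {linear G -> M}) :
  short_exact al be -> (forall y, exists x, dl x = y) -> short_exact pb_fst (be \o dl).
Proof.
move=> [al_inj be_surj albe] dl_surj; split.
- exact: pb_fst_inj.
- by move=> m; have [y <-] := be_surj m; have [x <-] := dl_surj y; exists x.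
- move=> x; rewrite /= albe; split=> [[k kx]|[z <-]].
    by have [z zxk] := pb_mem (esym kx); exists z; rewrite /= zxk.
  by exists (pb_snd z); rewrite pb_comm.
Qed.

Lemma pb_fst_tensor_mono (Yc : lmodType R^c -> Prop) (L : lmodType R) (g : {linear L -> X}) :
  short_exact g dl -> tensor_mono Yc g -> tensor_mono Yc al -> tensor_mono Yc pb_fst.
Proof.
move=> g_dl g_mono al_mono Y Yc_Y t t0.
have [_ snd_surj inl_snd] := pb_snd_ses g_dl.
have snd_t0 : tens_eq (tens_map pb_snd t) [::].
  apply: al_mono => //; rewrite tens_map_comp (eq_tens_map (h := dl \o pb_fst)).
    by rewrite -tens_map_comp; apply: (tens_eq_map dl t0).
  by move=> z; rewrite /= pb_comm.
have [u ut] := (tensor_right_exact snd_surj inl_snd t).1 snd_t0.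
have u0 : tens_eq u [::].
  apply: g_mono => //; apply: tens_eq_trans t0.
  apply: tens_eq_trans (tens_eq_map pb_fst ut); rewrite tens_map_comp.
  by rewrite (eq_tens_map (h := g)) // => l; rewrite /= pb_inlE.
exact: tens_eq_trans (tens_eq_sym ut) (tens_eq_map (pb_inl g_dl) u0).
Qed.

End Pullback.

Section TensorMono.
Variables (R : pzRingType) (Yc : lmodType R^c -> Prop) (A B C : lmodType R).

Lemma eq_tensor_mono (f g : A -> B) : f =1 g -> tensor_mono Yc f -> tensor_mono Yc g.
Proof. by move=> fg f_mono Y Yc_Y s; rewrite -(eq_tens_map fg); apply: f_mono. Qed.

Variables (f : {linear A -> B}) (g : {linear B -> C}).

Lemma tensor_mono_comp : tensor_mono Yc f -> tensor_mono Yc g -> tensor_mono Yc (g \o f).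
Proof.
by move=> f_mono g_mono Y Yc_Y s; rewrite -tens_map_comp => /g_mono-/(_ Yc_Y)/f_mono; apply.
Qed.

Lemma tensor_mono_compl : tensor_mono Yc (g \o f) -> tensor_mono Yc f.
Proof.
by move=> gf_mono Y Yc_Y s /(tens_eq_map g); rewrite tens_map_comp => /gf_mono; apply.
Qed.

End TensorMono.

Lemma tensor_mono_of_exact (R : pzRingType) (Yc : lmodType R^c -> Prop)
    (U0 U1 K U2 : lmodType R)
    (a : {linear U0 -> U1}) (k : {linear U1 -> K}) (i : {linear K -> U2}) :
  (forall z, exists y, k y = z) -> (forall v, k (a v) = 0) ->
  (forall Y, Yc Y -> tensor_exact_at Y a (i \o k)) -> tensor_mono Yc i.
Proof.
move=> k_surj ka a_exact Y Yc_Y s; have [u <-] := tens_map_surj k_surj s.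
rewrite tens_map_comp => /(a_exact Y Yc_Y)[v vu].
apply: tens_eq_trans (tens_eq_map k (tens_eq_sym vu)) _.
by rewrite tens_map_comp; apply: tens_map0.
Qed.

Section Splice.
Variables (R : pzRingType) (G1 N2 G2 N3 G3 : lmodType R).
Variables (p1 : {linear G1 -> N2}) (i2 : {linear N2 -> G2}).
Variables (p2 : {linear G2 -> N3}) (i3 : {linear N3 -> G3}).
Hypotheses (p1_surj : forall n, exists x, p1 x = n) (i2p2 : short_exact i2 p2).

Lemma splice_exact : injective i3 -> exact_at (i2 \o p1) (i3 \o p2).
Proof.
have [_ _ i2p2_exact] := i2p2; move=> i3_inj x /=.
split=> [i3p2x|[y <-]]; last by rewrite (exact_at_comp0 i2p2_exact) linear0.
have /i2p2_exact[n <-] : p2 x = 0 by apply: i3_inj; rewrite i3p2x linear0.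
by have [y <-] := p1_surj n; exists y.
Qed.

Lemma splice_tensor_exact (Yc : lmodType R^c -> Prop) :
  tensor_mono Yc i3 -> forall Y, Yc Y -> tensor_exact_at Y (i2 \o p1) (i3 \o p2).
Proof.
have [_ p2_surj i2p2_exact] := i2p2; move=> i3_mono Y Yc_Y t.
have p2_exact := tensor_right_exact (Y := Y) p2_surj i2p2_exact.
rewrite -tens_map_comp; split=> [/i3_mono-/(_ Yc_Y)/p2_exact[u ut]|[s st]].
  have [s su] := tens_map_surj p1_surj u.
  by rewrite -su tens_map_comp in ut; exists s.
apply: tens_eq_trans (tens_eq_map i3 (tens_eq_map p2 (tens_eq_sym st))) _.
rewrite !tens_map_comp; apply: tens_map0 => y /=.
by rewrite (exact_at_comp0 i2p2_exact) linear0.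
Qed.

End Splice.

(* The complexes of [GF_of] have their differentials indexed by [n] and
   [n + 1], which are not convertible for open [n]; [castm] transports
   modules of an integer-indexed family along equalities of indices. *)
Section Cast.
Variables (R : pzRingType) (E : int -> lmodType R).

Definition castm i j (e : i = j) (x : E i) : E j := ecast k (E k) e x.

Lemma castm_linear i j (e : i = j) : linear (castm e).
Proof. by case: j / e. Qed.

HB.instance Definition _ i j (e : i = j) :=
  GRing.isLinear.Build R (E i) (E j) _ (castm e) (castm_linear e).

Lemma castm_inj i j (e : i = j) : injective (castm e).
Proof. by case: j / e. Qed.

Variables (A : lmodType R) (t : int -> int) (g : forall m, {linear E m -> E (t m)}).

Lemma exact_at_castm i j (e1 : i = j) J (e2 : t j = J) (f : A -> E i) :
  exact_at f (g i) -> exact_at (castm e1 \o f) (castm e2 \o g j).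
Proof. by move: e2; case: j / e1 => e2; case: J / e2. Qed.

Lemma tensor_exact_at_castm (Y : lmodType R^c) i j (e1 : i = j) J (e2 : t j = J)
    (f : A -> E i) :
  tensor_exact_at Y f (g i) -> tensor_exact_at Y (castm e1 \o f) (castm e2 \o g j).
Proof. by move: e2; case: j / e1 => e2; case: J / e2. Qed.

End Cast.

Section Reindex.
Variables (R : pzRingType) (E : int -> lmodType R) (s phi : int -> int).
Variables (e : forall n, s (phi n) = phi (n + 1)).
Variables (delta : forall m, {linear E m -> E (s m)}).

Definition complex_reindex n : {linear E (phi n) -> E (phi (n + 1))} :=
  castm (e n) \o delta (phi n).

Lemma reindex_exact :
  (forall m, exact_at (delta m) (delta (s m))) ->
  complex_exact (C := E \o phi) complex_reindex.
Proof.
by move=> delta_exact n; apply: (exact_at_castm (e n) (e (n + 1)) (delta_exact (phi n))).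
Qed.

Lemma reindex_tensor_exact Y :
  (forall m, tensor_exact_at Y (delta m) (delta (s m))) ->
  tensor_exact (C := E \o phi) Y complex_reindex.
Proof.
move=> delta_exact n.
by apply: (tensor_exact_at_castm (e n) (e (n + 1)) (delta_exact (phi n))).
Qed.

End Reindex.

Section GFof.
Variables (R : pzRingType) (Yc : lmodType R^c -> Prop) (P : lmodType R -> Prop).

Lemma GF_of_kernel (C : int -> lmodType R) (d : forall n, {linear C n -> C (n + 1)}) :
  (forall n, P (C n)) -> complex_exact d -> Ytensor_exact Yc d ->
  forall k (K : lmodType R) (i : {linear K -> C k}),
  injective i -> exact_at i (d k) -> GF_of P Yc K.
Proof.
move=> CP d_exact d_texact k K i i_inj i_exact.
have e n : n + k + 1 = n + 1 + k by rewrite addrAC.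
exists (C \o +%R^~ k), (complex_reindex e d); split.
- by move=> n; apply: CP.
- exact: (reindex_exact e d_exact).
- by move=> Y Yc_Y; apply: (reindex_tensor_exact e (d_texact Y Yc_Y)).
have e0 : k = 0 + k by rewrite add0r.
exists (castm e0 \o i); split; first by move=> x y /= /castm_inj/i_inj.
exact: (exact_at_castm e0 (e 0) i_exact).
Qed.

Definition Ytensor_ses (A B C : lmodType R) (f : {linear A -> B}) (g : {linear B -> C}) :=
  short_exact f g /\ tensor_mono Yc f.

Section Steps.
Variables (Q : lmodType R -> Prop) (M : lmodType R).

Record right_step := RightStep {
  rs_mid : lmodType R; rs_cok : lmodType R;
  rs_in : {linear M -> rs_mid}; rs_out : {linear rs_mid -> rs_cok};
  rs_ses : Ytensor_ses rs_in rs_out; rs_midP : P rs_mid; rs_cokQ : Q rs_cok }.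

Record left_step := LeftStep {
  ls_ker : lmodType R; ls_mid : lmodType R;
  ls_in : {linear ls_ker -> ls_mid}; ls_out : {linear ls_mid -> M};
  ls_ses : Ytensor_ses ls_in ls_out; ls_midP : P ls_mid; ls_kerQ : Q ls_ker }.

End Steps.

Lemma GF_of_chain (N G : int -> lmodType R) (s : int -> int)
    (s_succ : forall n, s n = n + 1)
    (i : forall n, {linear N n -> G n}) (p : forall n, {linear G n -> N (s n)}) :
  (forall n, Ytensor_ses (i n) (p n)) -> (forall n, P (G n)) -> GF_of P Yc (N 0).
Proof.
move=> ses GP; pose delta m : {linear G m -> G (s m)} := i (s m) \o p m.
have p_surj m : forall x, exists y, p m y = x by have [[]] := ses m.
have i_inj m : injective (i m) by have [[]] := ses m.
exists (G \o id), (complex_reindex (phi := id) s_succ delta); split=> //.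
- apply: reindex_exact => m.
  exact: splice_exact (p_surj m) (ses (s m)).1 (i_inj (s (s m))).
- move=> Y Yc_Y; apply: reindex_tensor_exact => m.
  exact (splice_tensor_exact (p_surj m) (ses (s m)).1 (ses (s (s m))).2 Yc_Y).
exists (i 0); split; first exact: i_inj.
apply: (exact_at_castm (erefl 0) (s_succ 0)).
by have [[_ _ ip0] _] := ses 0; apply: exact_at_inj_comp (i_inj (s 0)) ip0.
Qed.

Section Splicing.
Variable Q : lmodType R -> Prop.
Hypothesis Q_right : forall M, Q M -> inhabited (right_step Q M).
Hypothesis Q_left : forall M, Q M -> inhabited (left_step Q M).
Variables (M : lmodType R) (QM : Q M).

Definition next_right (N : {N | Q N}) := inhabited_witness (Q_right (svalP N)).
Definition next_left (N : {N | Q N}) := inhabited_witness (Q_left (svalP N)).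

Fixpoint right_chain k : {N | Q N} :=
  if k is k'.+1 then let r := next_right (right_chain k') in exist Q _ (rs_cokQ r)
  else exist Q M QM.

Fixpoint left_chain k : {N | Q N} :=
  if k is k'.+1 then let l := next_left (left_chain k') in exist Q _ (ls_kerQ l)
  else exist Q M QM.

Local Notation RS k := (next_right (right_chain k)).
Local Notation LS k := (next_left (left_chain k)).

(* Index [Posz k] carries the [k]-th right step and [Negz k] (that is,
   [-(k + 1)]) the [k]-th left step, whose kernel is [left_chain k.+1]. *)
Definition chain_mod (n : int) : lmodType R :=
  sval (match n with Posz k => right_chain k | Negz k => left_chain k.+1 end).

Definition chain_mid (n : int) : lmodType R :=
  match n with Posz k => rs_mid (RS k) | Negz k => ls_mid (LS k) end.

Definition chain_succ (n : int) : int :=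
  match n with Posz k => Posz k.+1 | Negz 0 => Posz 0 | Negz k.+1 => Negz k end.

Lemma chain_succE n : chain_succ n = n + 1.
Proof.
case: n => [k|[|k]] //=; first by rewrite -addn1 PoszD.
by rewrite !NegzE -[k.+2]addn1 PoszD opprD addrNK.
Qed.

Definition chain_in n : {linear chain_mod n -> chain_mid n} :=
  match n with Posz k => rs_in (RS k) | Negz k => ls_in (LS k) end.

Definition chain_out n : {linear chain_mid n -> chain_mod (chain_succ n)} :=
  match n with
  | Posz k => rs_out (RS k)
  | Negz 0 => ls_out (LS 0)
  | Negz k.+1 => ls_out (LS k.+1)
  end.

Lemma chain_ses n : Ytensor_ses (chain_in n) (chain_out n).
Proof. by case: n => [k|[|k]]; [apply: rs_ses | apply: ls_ses | apply: ls_ses]. Qed.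

Lemma chain_midP n : P (chain_mid n).
Proof. by case: n => [k|k]; [apply: rs_midP | apply: ls_midP]. Qed.

Lemma GF_of_step_closed : GF_of P Yc M.
Proof. exact (GF_of_chain chain_succE chain_ses chain_midP). Qed.

End Splicing.

Lemma right_step_mono (Q Q' : lmodType R -> Prop) M :
  (forall N, Q N -> Q' N) -> right_step Q M -> right_step Q' M.
Proof. by move=> QQ' [G N f g fg GP NQ]; apply: (RightStep fg GP (QQ' _ NQ)). Qed.

Lemma left_step_mono (Q Q' : lmodType R -> Prop) M :
  (forall N, Q N -> Q' N) -> left_step Q M -> left_step Q' M.
Proof. by move=> QQ' [K G f g fg GP KQ]; apply: (LeftStep fg GP (QQ' _ KQ)). Qed.

End GFof.

Section CompleteResolution.
Variables (R : pzRingType) (Yc : lmodType R^c -> Prop) (P : lmodType R -> Prop).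
Variables (C : int -> lmodType R) (d : forall n, {linear C n -> C (n + 1)}).
Local Unset Implicit Arguments.
Hypotheses (CP : forall n, P (C n)) (d_exact : complex_exact d).
Hypothesis d_texact : Ytensor_exact Yc d.
Local Set Implicit Arguments.

Lemma d_comp0 n y : d (n + 1) (d n y) = 0.
Proof. by apply/(d_exact n); exists y. Qed.

Lemma d_im n y : exists z : kerm (d (n + 1)), val z = d n y.
Proof. exact/kerm_exact/d_comp0. Qed.

Definition d_corestr n : {linear C n -> kerm (d (n + 1))} :=
  factor_mono (@d_im n) val_inj.

Lemma d_corestrE n y : val (d_corestr n y) = d n y.
Proof. exact: factor_monoK. Qed.

Lemma d_corestr_surj n z : exists y, d_corestr n y = z.
Proof.
have [y dy] := (d_exact n (val z)).1 (kermP z).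
by exists y; apply: val_inj; rewrite d_corestrE.
Qed.

Lemma kerm_tensor_mono m : tensor_mono Yc (val : kerm (d (m + 1 + 1)) -> _).
Proof.
apply: (tensor_mono_of_exact (a := d m) (@d_corestr_surj (m + 1))).
  by move=> v; apply: val_inj; rewrite d_corestrE d_comp0.
move=> Y Yc_Y t; rewrite (eq_tens_map (h := d (m + 1))) //; first exact: d_texact.
by move=> y; rewrite /= d_corestrE.
Qed.

Variables (M : lmodType R) (f : {linear M -> C 0}).
Hypotheses (f_inj : injective f) (f_exact : exact_at f (d 0)).

Lemma d_im_f y : exists m, f m = d (-1) y.
Proof. by apply/f_exact; exact (@d_comp0 (-1) y). Qed.

Definition res_proj : {linear C (-1) -> M} := factor_mono d_im_f f_inj.

Lemma res_projK y : f (res_proj y) = d (-1) y.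
Proof. exact: factor_monoK. Qed.

Lemma res_proj_surj m : exists y, res_proj y = m.
Proof.
have [y dy] := (d_exact (-1) (f m)).1 ((f_exact _).2 (ex_intro _ m erefl)).
by exists y; apply: f_inj; rewrite res_projK.
Qed.

Lemma GF_of_right_step : inhabited (right_step Yc P (GF_of P Yc) M).
Proof.
have f_mono : tensor_mono Yc f.
  apply: (tensor_mono_of_exact (a := d (-2)) res_proj_surj).
    by move=> v; apply: f_inj; rewrite res_projK linear0; exact (@d_comp0 (-2) v).
  move=> Y Yc_Y t; rewrite (eq_tens_map (h := d (-1))).
    exact (d_texact Y Yc_Y (-2) t).
  exact: res_projK.
have f_ses : short_exact f (d_corestr 0).
  split=> //; first exact: d_corestr_surj.
  move=> x; rewrite -f_exact; split=> [/(congr1 val)|dx]; first by rewrite d_corestrE.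
  by apply: val_inj; rewrite d_corestrE.
constructor; apply: (RightStep (conj f_ses f_mono) (CP 0)).
exact (GF_of_kernel CP d_exact d_texact val_inj (kerm_exact _)).
Qed.

Lemma GF_of_left_step : inhabited (left_step Yc P (GF_of P Yc) M).
Proof.
have val_ses : short_exact (val : kerm (d (-1)) -> _) res_proj.
  split; [exact: val_inj | exact: res_proj_surj |] => y.
  by rewrite -kerm_exact -res_projK -(linear0 f); split=> [->|/f_inj].
constructor; refine (LeftStep (conj val_ses _) (CP (-1)) _).
  exact (@kerm_tensor_mono (-3)).
exact (GF_of_kernel CP d_exact d_texact val_inj (kerm_exact _)).
Qed.

End CompleteResolution.

Section GFofSteps.
Variables (R : pzRingType) (Yc : lmodType R^c -> Prop) (P : lmodType R -> Prop).

Lemma GF_of_stepsP M : GF_of P Yc M <->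
  inhabited (right_step Yc P (GF_of P Yc) M) /\ inhabited (left_step Yc P (GF_of P Yc) M).
Proof.
split=> [[C [d [CP d_exact d_texact [f [f_inj f_exact]]]]]|[r l]].
  by split; [apply: GF_of_right_step f_inj f_exact | apply: GF_of_left_step f_inj f_exact].
pose Q N := GF_of P Yc N \/
  inhabited (right_step Yc P (GF_of P Yc) N) /\ inhabited (left_step Yc P (GF_of P Yc) N).
have Q_steps N : Q N ->
    inhabited (right_step Yc P (GF_of P Yc) N) /\ inhabited (left_step Yc P (GF_of P Yc) N).
  case=> // [[C [d [CP d_exact d_texact [f [f_inj f_exact]]]]]].
  by split; [apply: GF_of_right_step f_inj f_exact | apply: GF_of_left_step f_inj f_exact].
have GF_Q N : GF_of P Yc N -> Q N by left.
apply: (GF_of_step_closed (Q := Q)); last by right.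
- by move=> N /Q_steps[[r'] _]; constructor; apply: right_step_mono r'.
- by move=> N /Q_steps[_ [l']]; constructor; apply: left_step_mono l'.
Qed.

Lemma odd_absz_succ (n : int) : odd `|n + 1| = ~~ odd `|n|.
Proof.
case: n => [k|k]; first by rewrite -PoszD addn1.
have -> : Negz k + 1 = - k%:Z by rewrite NegzE -[k.+1]addn1 PoszD opprD addrNK.
by rewrite abszN NegzE abszN /= negbK.
Qed.

Lemma GF_of_class X : P X -> GF_of P Yc X.
Proof.
move=> PX; pose d (n : int) : {linear X -> X} :=
  if odd `|n| then idfun : {linear X -> X} else \0 : {linear X -> X}.
exists (fun _ => X), d; split=> //.
- move=> n x; rewrite /d odd_absz_succ; case: (odd _) => /=.
    by split=> // _; exists x.
  by split=> [->|[y <-]]; [exists 0|].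
- move=> Y Yc_Y n t; rewrite /d odd_absz_succ; case: (odd _) => /=.
    split=> [_|_]; last exact: tens_map0.
    by exists t; rewrite (eq_tens_map (h := id)) // tens_map_id.
  rewrite (eq_tens_map (g := idfun) (h := id)) // tens_map_id.
  split=> [t0|[s st]]; first by exists [::]; apply: tens_eq_sym.
  exact: tens_eq_trans (tens_eq_sym st) (tens_map0 _ _).
by exists idfun; split=> // x; rewrite /d /=; split=> // _; exists x.
Qed.

End GFofSteps.

Arguments GF_of_stepsP {R Yc P M}.

Section GF2.
Variables (R : pzRingType) (Xc : lmodType R -> Prop) (Yc : lmodType R^c -> Prop).
Hypothesis GF_ext : closed_under_extensions (GF Xc Yc).

Lemma GF_ses (A B C : lmodType R) (f : {linear A -> B}) (g : {linear B -> C}) :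
  short_exact f g -> GF Xc Yc A -> GF Xc Yc C -> GF Xc Yc B.
Proof. by case=> f_inj g_surj fg; apply: GF_ext f_inj g_surj fg. Qed.

Lemma GF2_right_step M : GF2 Xc Yc M -> inhabited (right_step Yc Xc (GF2 Xc Yc) M).
Proof.
move=> GF2M; have [[[G N a b [ab a_mono] GG GF2N]] _] := GF_of_stepsP.1 GF2M.
have [[[X L c e [ce c_mono] XX GL]] _] := GF_of_stepsP.1 GG.
have [[[G' N' h k [hk h_mono] GG' GF2N']] _] := GF_of_stepsP.1 GF2N.
have [c_inj _ _] := ce.
have inr_ses := po_inr_ses b ce.
have inl_ses := po_inl_ses_of_surj c_inj ab.
have ca_mono := tensor_mono_comp a_mono c_mono.
have GF_Q : GF Xc Yc (pushout (po_inr c b) h).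
  exact: GF_ses (po_inr_ses h inr_ses) GG' GL.
have GF2_P : GF2 Xc Yc (pushout c b).
  apply/GF_of_stepsP; split; constructor.
    exact (RightStep (conj (po_inl_ses _ hk) (po_inl_tensor_mono (a := po_inr c b) h_mono))
                     GF_Q GF2N').
  exact (LeftStep (conj inl_ses ca_mono) (GF_of_class Yc XX) GF2M).
by constructor; apply: RightStep (conj inl_ses ca_mono) XX GF2_P.
Qed.

Lemma GF2_left_step M : GF2 Xc Yc M -> inhabited (left_step Yc Xc (GF2 Xc Yc) M).
Proof.
move=> GF2M; have [_ [[K G al be [albe al_mono] GG GF2K]]] := GF_of_stepsP.1 GF2M.
have [_ [[L X ga dl [gadl ga_mono] XX GL]]] := GF_of_stepsP.1 GG.
have [_ [[K' G' ka la [kala ka_mono] GG' GF2K']]] := GF_of_stepsP.1 GF2K.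
have [_ dl_surj _] := gadl.
have fst_ses := pb_fst_ses_comp albe dl_surj.
have fst_mono := pb_fst_tensor_mono gadl ga_mono al_mono.
have snd_ses := pb_snd_ses al gadl.
have inl_mono : tensor_mono Yc (pb_inl (pb_snd dl al) kala).
  apply: (tensor_mono_compl (g := pb_fst la (pb_snd dl al))).
  by apply: eq_tensor_mono ka_mono => y; rewrite /= pb_inlE.
have GF_W : GF Xc Yc (pullback la (pb_snd dl al)).
  exact: GF_ses (pb_fst_ses la snd_ses) GL GG'.
have GF2_Z : GF2 Xc Yc (pullback dl al).
  apply/GF_of_stepsP; split; constructor.
    exact (RightStep (conj fst_ses fst_mono) (GF_of_class Yc XX) GF2M).
  exact (LeftStep (conj (pb_snd_ses _ kala) inl_mono) GF_W GF2K').
by constructor; apply: LeftStep (conj fst_ses fst_mono) XX GF2_Z.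
Qed.

End GF2.

Theorem theorem2p1 (R : pzRingType) (Xc : lmodType R -> Prop)
    (Yc : lmodType R^c -> Prop) :
  closed_under_extensions (GF Xc Yc) ->
  forall M : lmodType R, GF Xc Yc M <-> GF2 Xc Yc M.
Proof.
move=> GF_ext M; split=> [[C [d [CX d_exact d_texact f_ker]]]|].
  by exists C, d; split=> // n; apply: GF_of_class.
apply: GF_of_step_closed; [exact: GF2_right_step | exact: GF2_left_step].
Qed.
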